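(* For every $\Delta\in(0,1)$, if $N\ge164k^2\ln(4R/\Delta)+\frac{100\ln(2/\Delta)}{1-\tau}$, then with probability at least $1-\Delta$, $1-\widehat\tau\ge\frac{1-\tau}{8}$.
   Context: Let $R\ge 2$ be an integer and $\rho=(\rho_1,\dots,\rho_R)$ a probability vector with $\rho_r>0$ for all $r$. Let $Y_1,\dots,Y_N$ be i.i.d. labels with $\mathbb P(Y_j=r)=\rho_r$, $N_r=|\{j:Y_j=r\}|$, $\widehat\rho_r=N_r/N$. Fix an integer $k\ge1$. Set $\tau:=1-\sum_{r}\rho_r(1-\rho_r)^k$ and $\widehat\tau:=1-\sum_r\widehat\rho_r(1-\widehat\rho_r)^k$. *)

From HB Require Import structures.
From mathcomp Require Import all_boot all_order all_algebra.
From mathcomp Require Import all_classical all_reals all_analysis.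
Set Implicit Arguments. Unset Strict Implicit. Unset Printing Implicit Defensive.
Import Order.TTheory GRing.Theory Num.Theory.
Local Open Scope ring_scope.

(* Labels take values in 'I_nR (classes 1..R of the paper are 0..R-1 here).
   A sample of size N is y : {ffun 'I_N -> 'I_nR}; under the i.i.d. law
   with class probabilities rho, its probability is prod_j rho (y j). *)

Definition sample_prob (R : realType) (nR N : nat) (rho : 'I_nR -> R)
  (y : {ffun 'I_N -> 'I_nR}) : R := \prod_(j < N) rho (y j).

Definition Prob (R : realType) (nR N : nat) (rho : 'I_nR -> R)
  (E : pred {ffun 'I_N -> 'I_nR}) : R :=
  \sum_(y : {ffun 'I_N -> 'I_nR} | E y) sample_prob rho y.

Definition count_class (nR N : nat) (y : {ffun 'I_N -> 'I_nR}) (r : 'I_nR) : nat :=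
  #|[set j : 'I_N | y j == r]|.

Definition rho_hat (R : realType) (nR N : nat) (y : {ffun 'I_N -> 'I_nR})
  (r : 'I_nR) : R := (count_class y r)%:R / N%:R.

Definition tau_of (R : realType) (nR : nat) (k : nat) (p : 'I_nR -> R) : R :=
  1 - \sum_(r < nR) p r * (1 - p r) ^+ k.

From HB Require Import structures.
From mathcomp Require Import all_boot all_order all_algebra.
From mathcomp Require Import all_classical all_reals all_analysis.
From mathcomp Require Import ring lra.
Set Implicit Arguments. Unset Strict Implicit. Unset Printing Implicit Defensive.
Import Order.TTheory GRing.Theory Num.Theory.
Local Open Scope ring_scope.

(* Let [q = 1 - tau] and let [r0] be a most likely class.  The classes other
   than [r0] carry at least half of [q]: the term [rho r0 (1 - rho r0)^k] is
   dominated by the other classes, since [1 - rho r >= rho r0] and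
   [1 - rho r >= 1 - rho r0] for [r <> r0].  Two Chernoff bounds then hold
   together with probability [1 - Delta]: the empirical average of
   [(1 - rho r)^k] over the classes [r <> r0] stays above half its mean minus
   [q / 100], and no empirical frequency exceeds [rho r + 1 / (5k)].  As
   [rho r <= 1/2] for [r <> r0], Bernoulli's inequality turns the second fact
   into [(1 - rho_hat r)^k >= 3/5 (1 - rho r)^k], whence
   [1 - tau_hat >= 3/5 (q/4 - q/100) >= q/8]. *)

Section ElementaryBounds.
Variable R : realType.
Implicit Types (g l u : R).

Lemma expRN_le_1B_half g : 0 <= g <= 1 -> expR (- g) <= 1 - g / 2.
Proof.
case/andP=> g0 g1.
have expRNK : expR (- g) * expR g = 1 by rewrite -expRD addNr expR0.
have := ler_wpM2l (ltW (expR_gt0 (- g))) (expR_ge1Dx g).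
have := expR_gt0 (- g); nra.
Qed.

Lemma expR_mul_1B_le1 l : expR l * (1 - l) <= 1.
Proof.
have := ler_wpM2l (ltW (expR_gt0 l)) (expR_ge1Dx (- l)).
by rewrite -expRD subrr expR0.
Qed.

Lemma expR_sub1_le l : 0 <= l < 1 -> expR l - 1 <= l + l ^+ 2 / (1 - l).
Proof.
case/andP=> l0 l1.
have -> : l + l ^+ 2 / (1 - l) = (1 - l)^-1 - 1 by field; lra.
by rewrite lerD2r -div1r ler_pdivlMr ?subr_gt0 // expR_mul_1B_le1.
Qed.

Lemma bernoulli_ineq u k : u <= 1 -> 1 - k%:R * u <= (1 - u) ^+ k.
Proof.
move=> u1; elim: k => [|k IH]; first by rewrite expr0 mul0r subr0.
rewrite exprS -natr1.
have : (1 - u) * (1 - k%:R * u) <= (1 - u) * (1 - u) ^+ k.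
  by apply: ler_wpM2l => //; lra.
have : 0 <= k%:R * u ^+ 2 by apply: mulr_ge0; [exact: ler0n | exact: sqr_ge0].
rewrite expr2; nra.
Qed.

Lemma perturb_expr1B_ge k (p h : R) : (0 < k)%N ->
  0 <= p <= 1 / 2 -> h < p + 1 / (5 * k%:R) -> 3 / 5 * (1 - p) ^+ k <= (1 - h) ^+ k.
Proof.
move=> k_gt0 /andP[p0 p_half] hp.
have k1 : (1 : R) <= k%:R by rewrite ler1n.
set e := 1 / (5 * k%:R) in hp.
have ke : k%:R * e = 1 / 5 by rewrite /e; field; lra.
have e_le : e <= 1 / 5 by rewrite /e ler_pdivrMr; lra.
have e0 : 0 < e by rewrite /e divr_gt0 //; lra.
set u := e / (1 - p).
have u_le : u <= 2 * e by rewrite /u ler_pdivrMr; nra.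
have u_ge0 : 0 <= u by rewrite /u divr_ge0 //; lra.
have bern : 3 / 5 <= (1 - u) ^+ k.
  by apply: le_trans (bernoulli_ineq k _); nra.
have factor : 1 - p - e = (1 - p) * (1 - u) by rewrite /u; field; lra.
have : ((1 - p) * (1 - u)) ^+ k <= (1 - h) ^+ k.
  by rewrite -factor; apply: lerXn2r; rewrite ?nnegrE; lra.
rewrite exprMn; apply: le_trans.
by rewrite mulrC ler_wpM2l // exprn_ge0 //; lra.
Qed.

Lemma overshoot_exponent_le (x : R) : 1 <= x ->
  - (1 / (10 * x) * (1 / (5 * x))) + (1 / (10 * x)) ^+ 2 / (1 - 1 / (10 * x))
    <= - (164 * x ^+ 2)^-1.
Proof.
move=> x1.
have y0 : 0 < 1 / x by rewrite divr_gt0 //; lra.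
have y1 : 1 / x <= 1 by rewrite ler_pdivrMr; lra.
have -> : 1 / (10 * x) = (1 / x) / 10 by field; lra.
have -> : 1 / (5 * x) = (1 / x) / 5 by field; lra.
have -> : (164 * x ^+ 2)^-1 = (1 / x) ^+ 2 / 164 by field; lra.
move: (1 / x) y0 y1 => y y0 y1.
have y2 : 0 <= y ^+ 2 by exact: sqr_ge0.
have : (y / 10) ^+ 2 / (1 - y / 10) <= y ^+ 2 / 90.
  by rewrite ler_pdivrMr; [rewrite expr2 in y2 *; nra | lra].
lra.
Qed.

End ElementaryBounds.

Section Distribution.
Variables (R : realType) (nR : nat) (rho : 'I_nR -> R).
Hypotheses (rho_ge0 : forall r, 0 <= rho r) (rho_sum1 : \sum_r rho r = 1).

Lemma sum_rho_neq (r : 'I_nR) : \sum_(s | s != r) rho s = 1 - rho r.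
Proof. by rewrite -rho_sum1 [in RHS](bigD1 r) //=; lra. Qed.

Lemma add_rho_le1 {r s : 'I_nR} : r != s -> rho r + rho s <= 1.
Proof.
move=> rs; rewrite -rho_sum1 (bigD1 r) //= lerD2l (bigD1 s) 1?eq_sym //= lerDl.
exact: sumr_ge0.
Qed.

Lemma mgf_shift_le (g : 'I_nR -> R) (th : R) : (forall r, 0 <= g r <= 1) ->
  \sum_r rho r * expR (th - g r) <= expR (th - (\sum_r rho r * g r) / 2).
Proof.
move=> g01.
have -> : \sum_r rho r * expR (th - g r) = expR th * \sum_r rho r * expR (- g r).
  by rewrite big_distrr; apply: eq_bigr => r _; rewrite expRD mulrCA.
rewrite expRD ler_wpM2l ?expR_ge0 //; apply: le_trans (expR_ge1Dx _).
have -> : 1 - (\sum_r rho r * g r) / 2 = \sum_r rho r * (1 - g r / 2).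
  under [RHS]eq_bigr do rewrite mulrBr mulr1 mulrA.
  by rewrite sumrB rho_sum1 -mulr_suml.
by apply: ler_sum => r _; rewrite ler_wpM2l ?expRN_le_1B_half.
Qed.

Lemma mgf_indicator_le (r : 'I_nR) (l e : R) : 0 <= l < 1 ->
  \sum_s rho s * expR (l * ((s == r)%:R - rho r - e))
    <= expR (- (l * e) + l ^+ 2 / (1 - l)).
Proof.
move=> /andP[l0 l1].
have -> : \sum_s rho s * expR (l * ((s == r)%:R - rho r - e))
    = expR (- (l * (rho r + e))) * (1 + rho r * (expR l - 1)).
  rewrite (bigD1 r) //= eqxx (eq_bigr (fun s => rho s * expR (- (l * (rho r + e))))).
    rewrite -mulr_suml sum_rho_neq -[expR (l * _)]/(expR (l * (1 - rho r - e))).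
    have -> : l * (1 - rho r - e) = l + - (l * (rho r + e)) by ring.
    by rewrite expRD; ring.
  by move=> s /negbTE ->; rewrite /= mulr0n; congr (_ * expR _); ring.
have rho_le1 : rho r <= 1 by rewrite -rho_sum1 (bigD1 r) //= lerDl sumr_ge0.
have growth : rho r * (expR l - 1) <= rho r * (l + l ^+ 2 / (1 - l)).
  by apply: ler_wpM2l => //; apply: expR_sub1_le; rewrite l0 l1.
apply: le_trans (_ : expR (- (l * (rho r + e))) * expR (rho r * (expR l - 1)) <= _).
  by rewrite ler_wpM2l ?expR_ge0 ?expR_ge1Dx.
rewrite -expRD ler_expR.
have : rho r * (l ^+ 2 / (1 - l)) <= l ^+ 2 / (1 - l).
  by rewrite ler_piMl // divr_ge0 ?sqr_ge0 // subr_ge0 ltW.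
lra.
Qed.

Lemma rho_lt1 (r : 'I_nR) : (1 < nR)%N -> (forall s, 0 < rho s) -> rho r < 1.
Proof.
move=> nR_gt1 rho_gt0.
have [s sr] : exists s, s != r.
  have : (1 < #|'I_nR|)%N by rewrite card_ord.
  case/card_gt1P => x [y [_ _ xy]].
  by case: (eqVneq x r) => [xr|]; [exists y; rewrite -xr eq_sym | exists x].
by have := add_rho_le1 sr; have := rho_gt0 s; lra.
Qed.

Lemma tau_of_lt1 k (r : 'I_nR) : 0 < rho r < 1 -> tau_of k rho < 1.
Proof.
case/andP=> rho_r_gt0 rho_r_lt1; rewrite /tau_of ltrBlDr ltrDl (bigD1 r) //=.
have : 0 < rho r * (1 - rho r) ^+ k by rewrite mulr_gt0 ?exprn_gt0 ?subr_gt0.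
have : 0 <= \sum_(s | s != r) rho s * (1 - rho s) ^+ k.
  apply: sumr_ge0 => s sr; rewrite mulr_ge0 ?exprn_ge0 ?subr_ge0 //.
  by have := add_rho_le1 sr; have := rho_ge0 r; lra.
lra.
Qed.

Section MaxClass.
Variable r0 : 'I_nR.
Hypothesis rho_max : forall r, rho r <= rho r0.

Definition nonmax_weight k r : R := if r == r0 then 0 else (1 - rho r) ^+ k.

Lemma rho_le_half r : r != r0 -> rho r <= 1 / 2.
Proof. by move=> rr0; have := add_rho_le1 rr0; have := rho_max r; lra. Qed.

Lemma nonmax_weight_in01 k r : 0 <= nonmax_weight k r <= 1.
Proof.
rewrite /nonmax_weight; case: eqP => [_|/eqP rr0]; first by rewrite lexx ler01.
have := rho_le_half rr0; have := rho_ge0 r => ? ?.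
by rewrite exprn_ge0 ?exprn_ile1 //; lra.
Qed.

Lemma max_term_le_sum_neq k : (0 < k)%N ->
  rho r0 * (1 - rho r0) ^+ k <= \sum_(r | r != r0) rho r * (1 - rho r) ^+ k.
Proof.
case: k => // k _.
have -> : rho r0 * (1 - rho r0) ^+ k.+1
    = \sum_(r | r != r0) rho r * (rho r0 * (1 - rho r0) ^+ k).
  by rewrite -mulr_suml sum_rho_neq exprS; ring.
apply: ler_sum => r rr0; rewrite exprS ler_wpM2l //.
have := add_rho_le1 rr0; have := rho_max r; have := rho_ge0 r => ? ? ?.
apply: ler_pM; rewrite ?exprn_ge0 //; try lra.
by apply: lerXn2r; rewrite ?nnegrE; lra.
Qed.

Lemma tau_of_half_le k : (0 < k)%N ->
  (1 - tau_of k rho) / 2 <= \sum_r rho r * nonmax_weight k r.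
Proof.
move=> k_gt0.
have -> : \sum_r rho r * nonmax_weight k r = \sum_(r | r != r0) rho r * (1 - rho r) ^+ k.
  rewrite (bigD1 r0) //= /nonmax_weight eqxx mulr0 add0r.
  by apply: eq_bigr => r /negbTE ->.
rewrite /tau_of subKr (bigD1 r0) //=.
have := max_term_le_sum_neq k_gt0; lra.
Qed.

Lemma nonmax_weight_ge k (h : 'I_nR -> R) : (0 < k)%N ->
  (forall r, 0 <= h r <= 1) -> (forall r, r != r0 -> h r < rho r + 1 / (5 * k%:R)) ->
  3 / 5 * \sum_r h r * nonmax_weight k r <= 1 - tau_of k h.
Proof.
move=> k_gt0 h01 h_lt.
rewrite /tau_of subKr mulr_sumr; apply: ler_sum => r _.
have /andP[h0 h1] := h01 r.
rewrite /nonmax_weight; case: eqP => [_|/eqP rr0].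
  by rewrite !mulr0 mulr_ge0 ?exprn_ge0 ?subr_ge0.
rewrite mulrCA ler_wpM2l // perturb_expr1B_ge ?h_lt //.
by rewrite rho_ge0 rho_le_half.
Qed.

End MaxClass.
End Distribution.

Section Sampling.
Variables (R : realType) (nR N : nat) (rho : 'I_nR -> R).
Hypotheses (rho_ge0 : forall r, 0 <= rho r) (rho_sum1 : \sum_r rho r = 1).

Local Notation sample := {ffun 'I_N -> 'I_nR}.

Lemma sum_prod_ffun (F : 'I_nR -> R) :
  \sum_(y : sample) \prod_(j < N) F (y j) = (\sum_r F r) ^+ N.
Proof.
rewrite -[in RHS](card_ord N) -prodr_const.
by rewrite (bigA_distr_bigA (fun (j : 'I_N) (r : 'I_nR) => F r)).
Qed.

Lemma sample_prob_ge0 (y : sample) : 0 <= sample_prob rho y.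
Proof. exact: prodr_ge0. Qed.

Lemma le_Prob (E F : pred sample) :
  (forall y, E y -> F y) -> Prob rho E <= Prob rho F.
Proof.
move=> EF; rewrite /Prob [X in _ <= X](bigID E) /=.
have -> : \sum_(y | F y && E y) sample_prob rho y = \sum_(y | E y) sample_prob rho y.
  by apply: eq_bigl => y; case: (boolP (E y)) => [/EF ->|]; rewrite ?andbF.
by rewrite lerDl; apply: sumr_ge0 => y _; exact: sample_prob_ge0.
Qed.

Lemma Prob_sum_ge0_le (f : 'I_nR -> R) :
  Prob rho (fun y : sample => 0 <= \sum_(j < N) f (y j))
    <= (\sum_r rho r * expR (f r)) ^+ N.
Proof.
set E := fun y : sample => 0 <= \sum_(j < N) f (y j).
rewrite /Prob -sum_prod_ffun [X in _ <= X](bigID E) /=.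
rewrite -[X in X <= _]addr0; apply: lerD.
  apply: ler_sum => y hy; rewrite big_split /= -expR_sum /sample_prob.
  rewrite -[X in X <= _]mulr1; apply: ler_wpM2l; first exact: prodr_ge0.
  by rewrite -expR0 ler_expR.
apply: sumr_ge0 => y _; apply: prodr_ge0 => j _.
by apply: mulr_ge0 => //; exact: expR_ge0.
Qed.

Lemma chernoff_bound (f : 'I_nR -> R) (c delta : R) : 0 < delta ->
  \sum_r rho r * expR (f r) <= expR (- c) -> ln delta^-1 <= N%:R * c ->
  Prob rho (fun y : sample => 0 <= \sum_(j < N) f (y j)) <= delta.
Proof.
move=> delta_gt0 mgf_le sizeN.
apply: le_trans (Prob_sum_ge0_le f) _.
apply: le_trans (_ : expR (- c) ^+ N <= _).
  apply: lerXn2r; rewrite ?nnegrE ?expR_ge0 //.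
  by apply: sumr_ge0 => r _; apply: mulr_ge0 => //; exact: expR_ge0.
have lnK_inv : expR (ln delta^-1) = delta^-1 by apply: lnK; rewrite posrE invr_gt0.
by rewrite -expRM_natl mulrN -[leRHS]invrK -lnK_inv -expRN ler_expR lerN2.
Qed.

Lemma Prob_cover (I : finType) (E A : pred sample) (B : I -> pred sample) :
  (forall y, ~~ E y -> A y || [exists i, B i y]) ->
  1 - Prob rho A - \sum_i Prob rho (B i) <= Prob rho E.
Proof.
move=> cover.
have mass1 : \sum_(y : sample) sample_prob rho y = 1.
  by rewrite /sample_prob sum_prod_ffun rho_sum1 expr1n.
suff : \sum_(y | ~~ E y) sample_prob rho y <= Prob rho A + \sum_i Prob rho (B i).
  by rewrite (bigID E) /= in mass1; rewrite /Prob; lra.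
rewrite /Prob (exchange_big_dep xpredT) //= big_mkcond [X in _ <= X + _]big_mkcond.
rewrite -big_split /=; apply: ler_sum => y _.
have w0 := sample_prob_ge0 y.
have sum_ge0 : 0 <= \sum_(i | B i y) sample_prob rho y by exact: sumr_ge0.
case: (boolP (E y)) => [_ | /cover]; first by apply: addr_ge0 => //; case: (A y).
case: (A y) => /= [_ | /existsP[i Bi]]; first by rewrite lerDl.
by rewrite add0r (bigD1 i) //= lerDl; exact: sumr_ge0.
Qed.

Lemma count_class_le (y : sample) r : (count_class y r <= N)%N.
Proof. by rewrite /count_class -[X in (_ <= X)%N](card_ord N) max_card. Qed.

Lemma rho_hat_in01 (y : sample) r : 0 <= rho_hat R y r <= 1.
Proof.
rewrite /rho_hat divr_ge0 //=; have [N0|N_gt0] := posnP N.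
  by have -> : N%:R = 0 :> R by rewrite N0.
by rewrite ler_pdivrMr ?ltr0n // mul1r ler_nat count_class_le.
Qed.

Lemma mulN_rho_hat (y : sample) r : N%:R * rho_hat R y r = (count_class y r)%:R.
Proof.
have [N0|N_gt0] := posnP N.
  move: (count_class_le y r); move: (count_class y r) (rho_hat R y r) => c h.
  by rewrite N0 leqn0 => /eqP ->; rewrite mul0r.
by rewrite /rho_hat mulrC divfK // pnatr_eq0 -lt0n.
Qed.

Lemma sum_rho_hat (g : 'I_nR -> R) (y : sample) :
  \sum_(j < N) g (y j) = N%:R * \sum_r rho_hat R y r * g r.
Proof.
rewrite mulr_sumr (partition_big y xpredT) //=; apply: eq_bigr => r _.
rewrite mulrA mulN_rho_hat /count_class mulr_natl -sumr_const.
rewrite (eq_bigr (fun _ => g r)); last by move=> j /eqP ->.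
by apply: eq_bigl => j; rewrite inE.
Qed.

Lemma Prob_rho_hat_mean_low (g : 'I_nR -> R) (c delta : R) :
  0 < delta -> (forall r, 0 <= g r <= 1) -> ln delta^-1 <= N%:R * c ->
  Prob rho (fun y : sample =>
    \sum_r rho_hat R y r * g r <= (\sum_r rho r * g r) / 2 - c) <= delta.
Proof.
move=> delta_gt0 g01 sizeN.
set th := (\sum_r rho r * g r) / 2 - c.
apply: le_trans (chernoff_bound (f := fun r => th - g r) delta_gt0 _ sizeN).
  apply: le_Prob => y low.
  by rewrite sumrB sumr_const card_ord sum_rho_hat subr_ge0 -(mulr_natl th) ler_wpM2l.
have := mgf_shift_le rho_ge0 rho_sum1 th g01.
by rewrite (_ : th - _ = - c) // /th; ring.
Qed.

Lemma Prob_rho_hat_overshoot (r : 'I_nR) k (delta : R) : (0 < k)%N -> 0 < delta ->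
  ln delta^-1 <= N%:R / (164 * k%:R ^+ 2) ->
  Prob rho (fun y : sample => rho r + 1 / (5 * k%:R) <= rho_hat R y r) <= delta.
Proof.
move=> k_gt0 delta_gt0 sizeN.
have k1 : (1 : R) <= k%:R by rewrite ler1n.
pose l : R := 1 / (10 * k%:R); set e := 1 / (5 * k%:R).
have l01 : 0 <= l < 1 by rewrite /l divr_ge0 ?ltr_pdivrMr //=; lra.
apply: le_trans (chernoff_bound
  (f := fun s => l * ((s == r)%:R - rho r - e)) delta_gt0 _ sizeN).
  apply: le_Prob => y over.
  have indicator : \sum_s rho_hat R y s * (s == r)%:R = rho_hat R y r.
    rewrite (bigD1 r) //= eqxx mulr1 big1 ?addr0 // => s /negbTE ->.
    by rewrite mulr0.
  rewrite -mulr_sumr !sumrB !sumr_const card_ord.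
  rewrite (sum_rho_hat (fun s => (s == r)%:R)) indicator.
  rewrite -(mulr_natl (rho r)) -(mulr_natl e) mulr_ge0 //; first by case/andP: l01.
  have : (0 : R) <= N%:R by [].
  nra.
apply: le_trans (mgf_indicator_le rho_ge0 rho_sum1 r e l01) _.
by rewrite ler_expR overshoot_exponent_le.
Qed.

End Sampling.

Lemma sample_size_split (R : realType) (k nR N : nat) (q Delta : R) :
  (1 <= k)%N -> (2 <= nR)%N -> 0 < q -> 0 < Delta < 1 ->
  164 * k%:R ^+ 2 * ln (4 * nR%:R / Delta) + 100 * ln (2 / Delta) / q <= N%:R ->
  [/\ ln (Delta / 2)^-1 <= N%:R * (q / 100)
    & ln (Delta / (4 * nR%:R))^-1 <= N%:R / (164 * k%:R ^+ 2)].
Proof.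
move=> k1 nR2 q_gt0 /andP[D0 D1] sizeN; rewrite !invf_div.
have nR2_R : (2 : R) <= nR%:R by rewrite ler_nat.
have kk : (1 : R) <= k%:R ^+ 2 by rewrite expr_ge1 // ler1n.
have : 0 < ln (4 * nR%:R / Delta) by apply: ln_gt0; rewrite ltr_pdivlMr //; lra.
have : 0 <= ln (2 / Delta) by apply: ln_ge0; rewrite ler_pdivlMr //; lra.
move: (ln _) (ln _) sizeN => L2 L1 sizeN L2_ge0 L1_gt0.
have : 0 <= 100 * L2 / q by rewrite divr_ge0 ?mulr_ge0 //; lra.
have : 0 <= 164 * k%:R ^+ 2 * L1 by rewrite !mulr_ge0 //; lra.
move=> A_ge0 B_ge0; split.
  have : 100 * L2 / q <= N%:R by lra.
  rewrite ler_pdivrMr //; lra.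
rewrite ler_pdivlMr; lra.
Qed.

Theorem mainTheorem5 (R : realType) (nR : nat) (rho : 'I_nR -> R) (k N : nat)
  (Delta : R) :
  (2 <= nR)%N ->
  (forall r, 0 < rho r) ->
  \sum_(r < nR) rho r = 1 ->
  (1 <= k)%N ->
  0 < Delta < 1 ->
  164 * (k%:R) ^+ 2 * ln (4 * nR%:R / Delta)
    + 100 * ln (2 / Delta) / (1 - tau_of k rho) <= N%:R ->
  1 - Delta <=
    Prob rho (fun y : {ffun 'I_N -> 'I_nR} =>
      (1 - tau_of k rho) / 8 <= 1 - tau_of k (rho_hat R y)).
Proof.
move=> nR2 rho_gt0 rho_sum1 k1 Delta01 sizeN; have /andP[D0 D1] := Delta01.
have rho_ge0 r : 0 <= rho r by exact: ltW.
have [r0 _ r0_max] := @arg_maxP _ _ _ (Ordinal (ltnW nR2)) xpredT rho isT.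
have rho_max r : rho r <= rho r0 by exact: r0_max.
set q := 1 - tau_of k rho in sizeN *.
have q_gt0 : 0 < q.
  by rewrite subr_gt0 (tau_of_lt1 rho_ge0 rho_sum1 k (_ : 0 < rho r0 < 1)) // rho_gt0 rho_lt1.
have q_half := tau_of_half_le rho_ge0 rho_sum1 rho_max k1; rewrite -/q in q_half.
have [sizeA sizeB] := sample_size_split k1 nR2 q_gt0 Delta01 sizeN.
pose low (y : {ffun 'I_N -> 'I_nR}) := \sum_r rho_hat R y r * nonmax_weight rho r0 k r
  <= (\sum_r rho r * nonmax_weight rho r0 k r) / 2 - q / 100.
pose high r (y : {ffun 'I_N -> 'I_nR}) := rho r + 1 / (5 * k%:R) <= rho_hat R y r.
have PA : Prob rho low <= Delta / 2.
  by apply: Prob_rho_hat_mean_low sizeA => //; [lra | exact: nonmax_weight_in01].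
have PB : \sum_r Prob rho (high r) <= Delta / 4.
  have DnR : 0 < Delta / (4 * nR%:R) by rewrite divr_gt0 // mulr_gt0 // ltr0n ltnW.
  apply: le_trans (ler_sum _ (fun r _ =>
    Prob_rho_hat_overshoot rho_ge0 rho_sum1 r k1 DnR sizeB)) _.
  rewrite sumr_const card_ord -(mulr_natr (Delta / _)) (_ : _ * _ = Delta / 4) //.
  by field; rewrite pnatr_eq0 -lt0n ltnW.
apply: le_trans (Prob_cover rho_ge0 rho_sum1 (A := low) (B := high) _); first lra.
move=> y; apply: contraNT; rewrite negb_or negb_exists => /andP[not_low /forallP not_high].
have high_lt r : rho_hat R y r < rho r + 1 / (5 * k%:R) by rewrite ltNge not_high.
have := nonmax_weight_ge rho_ge0 rho_sum1 rho_max k1 (rho_hat_in01 R y)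
  (fun r _ => high_lt r).
move: not_low; rewrite /low -ltNge; lra.
Qed.
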